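(* Assume that for every $\Phi\in\mathcal F_\Phi\setminus\mathcal I^*_\Phi$, \[ \max_{e,e'\in\mathcal{E}_{tr}} \sup_{u\in\mathcal{F}_{w}}|\mathbb{E}[ u\circ\Phi(\bm{x}^e)\,y^e]-\mathbb{E}[ u\circ\Phi(\bm{x}^{e'})\,y^{e'}]|>0 \ \text{ or }\ \max_{e,e'\in\mathcal{E}_{tr}}\sup_{u\in\mathcal{F}_{w}}|\mathbb{E}[\{ u\circ\Phi(\bm{x}^e)\}^2]-\mathbb{E}[\{ u\circ\Phi(\bm{x}^{e'})\}^2]|>0 . \] Then the feasible set of the FAIRM program (the set of $\Phi\in\mathcal F_\Phi$ satisfying the FAIRM constraints over $\mathcal E_{tr}$) equals $\mathcal I^*_\Phi$. If moreover $\mathcal I^*_\Phi\neq\emptyset$, then $w^{(\mathrm{FAIRM})}\circ\Phi^{(\mathrm{FAIRM})}=w^*\circ\Phi^*$.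
   Context: Let $\mathcal E_{all}$ be a finite set of environments and $\mathcal E_{tr}\subseteq\mathcal E_{all}$ the training environments; for each $e$, $(\bm x^e,y^e)\in\mathbb R^p\times\mathbb R$ has distribution $P^e$. Environment weights: $\alpha^*_e>0$ for $e\in\mathcal E_{all}$ (summing to one), and for training environments $\alpha_e=n_e/N_{tr}$ with $n_e$ the training sample size of $e$ and $N_{tr}=\sum_{e\in\mathcal E_{tr}}n_e$. $\mathcal F_\Phi$ is a class of representations $\Phi:\mathbb R^p\to\mathcal H$, $\mathcal F_w$ a class of functions $\mathcal H\to\mathbb R$. $\mathcal I^*_\Phi$ is the set of $\Phi\in\mathcal F_\Phi$ with $\max_{e,e'\in\mathcal E_{all}}\sup_{u\in\mathcal F_w}|\mathbb E[u\circ\Phi(\bm x^e)y^e]-\mathbb E[u\circ\Phi(\bm x^{e'})y^{e'}]|=0$ and $\max_{e,e'\in\mathcal E_{all}}\sup_{u\in\mathcal F_w}|\mathbb E[\{u\circ\Phi(\bm x^e)\}^2]-\mathbb E[\{u\circ\Phi(\bm x^{e'})\}^2]|=0$. Full-info FAIRM: $(w^*,\Phi^* )\in\arg\min_{w\in\mathcal F_w,\Phi\in\mathcal I^*_\Phi}\sum_{e\in\mathcal E_{all}}\alpha^*_e\mathbb E[(y^e-w\circ\Phi(\bm x^e))^2]$. FAIRM: $(w^{(\mathrm{FAIRM})},\Phi^{(\mathrm{FAIRM})})\in\arg\min_{w\in\mathcal F_w,\Phi\in\mathcal F_\Phi}\sum_{e\in\mathcal E_{tr}}\alpha_e\mathbb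 E[(y^e-w\circ\Phi(\bm x^e))^2]$ subject to $\max_{e,e'\in\mathcal E_{tr}}\sup_{u\in\mathcal F_w}|\mathbb E[u\circ\Phi(\bm x^e)y^e]-\mathbb E[u\circ\Phi(\bm x^{e'})y^{e'}]|=0$ and $\max_{e,e'\in\mathcal E_{tr}}\sup_{u\in\mathcal F_w}|\mathbb E[\{u\circ\Phi(\bm x^e)\}^2]-\mathbb E[\{u\circ\Phi(\bm x^{e'})\}^2]|=0$. *)

From HB Require Import structures.
From mathcomp Require Import all_boot all_order all_algebra.
From mathcomp Require Import all_classical all_reals all_analysis.
Set Implicit Arguments. Unset Strict Implicit. Unset Printing Implicit Defensive.
Import Order.TTheory GRing.Theory Num.Theory.
Local Open Scope classical_set_scope.
Local Open Scope ring_scope.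

Section FAIRM.
Context {R : realType} {d : measure_display} {Omega : measurableType d}.
Context {Env : finType} {p : nat} {H : Type}.
(* P e : the probability under which environment e is observed;
   (x e, y e) : the pair (x^e, y^e) with law P^e. *)
Variable P : Env -> probability Omega R.
Variable x : Env -> Omega -> 'rV[R]_p.
Variable y : Env -> Omega -> R.
Variable Fw : set (H -> R).

Definition Ex (e : Env) (f : Omega -> R) : \bar R :=
  (\int[P e]_w (f w)%:E)%E.

Definition momY (Phi : 'rV[R]_p -> H) (u : H -> R) (e : Env) : \bar R :=
  Ex e (fun w => u (Phi (x e w)) * y e w).

Definition mom2 (Phi : 'rV[R]_p -> H) (u : H -> R) (e : Env) : \bar R :=
  Ex e (fun w => u (Phi (x e w)) ^+ 2).

(* max_{e,e' in S} sup_{u in Fw} |m Phi u e - m Phi u e'|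
   (max over the finite set of pairs = its supremum) *)
Definition disc (S : {set Env})
    (m : ('rV[R]_p -> H) -> (H -> R) -> Env -> \bar R)
    (Phi : 'rV[R]_p -> H) : \bar R :=
  ereal_sup [set ereal_sup [set (`| m Phi u e - m Phi u e' |)%E | u in Fw]
            | e in [set e | e \in S] & e' in [set e | e \in S]].

Definition constr_set (FPhi : set ('rV[R]_p -> H)) (S : {set Env}) :
    set ('rV[R]_p -> H) :=
  [set Phi | FPhi Phi /\ disc S momY Phi = 0%E /\ disc S mom2 Phi = 0%E].

Definition Istar (FPhi : set ('rV[R]_p -> H)) := constr_set FPhi [set: Env].

Definition wrisk (S : {set Env}) (a : Env -> R) (w : H -> R)
    (Phi : 'rV[R]_p -> H) : \bar R :=
  (\sum_(e in S) ((a e)%:E * Ex e (fun o => ((y e o - w (Phi (x e o))) ^+ 2)%R)))%E.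

Definition argmin_pairs (C : set ('rV[R]_p -> H))
    (obj : (H -> R) -> ('rV[R]_p -> H) -> \bar R) :
    set ((H -> R) * ('rV[R]_p -> H)) :=
  [set wp | Fw wp.1 /\ C wp.2 /\
     forall w Phi, Fw w -> C Phi -> (obj wp.1 wp.2 <= obj w Phi)%E].

End FAIRM.

Definition alpha_tr {R : realType} {Env : finType} (Etr : {set Env})
    (n : Env -> nat) (e : Env) : R :=
  (n e)%:R / (\sum_(e' in Etr) n e')%:R.

From HB Require Import structures.
From mathcomp Require Import all_boot all_order all_algebra.
From mathcomp Require Import all_classical all_reals all_analysis.
From mathcomp Require Import lra ring.
Import measurable_realfun.

Set Implicit Arguments.
Unset Strict Implicit.
Unset Printing Implicit Defensive.
Import Order.TTheory GRing.Theory Num.Theory.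
Local Open Scope classical_set_scope.
Local Open Scope ring_scope.

(* Discrepancies are nonnegative and monotone in the set of environments, so
   every Phi in I* is feasible for FAIRM, and the identifiability assumption
   excludes every other feasible Phi.  For the risks, expand
   E_e[(y - w o Phi)^2] = E_e[y^2] - 2 E_e[(w o Phi) y] + E_e[(w o Phi)^2].
   On I* the last two moments do not depend on e, so a weighted risk with
   weights summing to one is a constant plus one and the same function of
   (w, Phi): both programs minimise the same objective up to a shift, over the
   same feasible set. *)

Section SquareExpansion.
Context {d : measure_display} {T : measurableType d} {R : realType}.
Variable mu : measure T R.
Variables f g : T -> R.
Hypotheses (mf : measurable_fun setT f) (mg : measurable_fun setT g).
Hypothesis if2 : mu.-integrable setT (fun o => (f o ^+ 2)%:E).
Hypothesis ig2 : mu.-integrable setT (fun o => (g o ^+ 2)%:E).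

Lemma integrable_mul_of_sqr : mu.-integrable setT (fun o => (g o * f o)%:E).
Proof.
apply: (le_integrable _ _ _ (integrableD _ ig2 if2)) => //.
  by apply/(measurable_EFinP _ (fun o => g o * f o)); exact: measurable_funM.
move=> o _ /=; rewrite lee_fin (ger0_norm (addr_ge0 (sqr_ge0 _) (sqr_ge0 _))).
rewrite ler_norml; apply/andP; split; nra.
Qed.

Lemma integral_sqrB :
  (\int[mu]_o ((f o - g o) ^+ 2)%:E =
   \int[mu]_o (f o ^+ 2)%:E + (-2)%:E * \int[mu]_o (g o * f o)%:E
   + \int[mu]_o (g o ^+ 2)%:E)%E.
Proof.
have igf := integrable_mul_of_sqr.
rewrite -integralZl //= -integralD //; last exact: integrableZl.
rewrite -integralD //; last by apply: integrableD => //; exact: integrableZl.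
by apply: eq_integral => o _ /=; rewrite -!EFinM -!EFinD; congr EFin; ring.
Qed.

End SquareExpansion.

Section Discrepancy.
Context {R : realType} {Env : finType} {p : nat} {H : Type}.
Variable Fw : set (H -> R).
Variable m : ('rV[R]_p -> H) -> (H -> R) -> Env -> \bar R.
Variable Phi : 'rV[R]_p -> H.

Lemma abse_sub_le_disc (S : {set Env}) u e e' : Fw u -> e \in S -> e' \in S ->
  (`|m Phi u e - m Phi u e'| <= disc Fw S m Phi)%E.
Proof.
move=> Fwu eS e'S; apply: le_trans (ereal_sup_ubound _); last first.
  by exists e => //; exists e'.
by apply: ereal_sup_ubound; exists u.
Qed.

Lemma le_disc (S S' : {set Env}) :
  S \subset S' -> (disc Fw S m Phi <= disc Fw S' m Phi)%E.
Proof.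
move/fintype.subsetP=> SS'; apply: ereal_sup_le => _ [e /= eS [e' /= e'S <-]].
by exists e; [exact: SS'|]; exists e'; [exact: SS'|].
Qed.

Lemma disc_eq0_nonempty (S : {set Env}) : disc Fw S m Phi = 0%E -> Fw !=set0.
Proof.
move=> disc0; apply/set0P/negP => /eqP Fw0.
suff : (disc Fw S m Phi <= -oo)%E by rewrite disc0.
apply: ge_ereal_sup => _ [e _ [e' _ <-]].
by rewrite Fw0 image_set0 ereal_sup0.
Qed.

Lemma disc_ge0 (S : {set Env}) :
  S != finset.set0 -> Fw !=set0 -> (0 <= disc Fw S m Phi)%E.
Proof.
case/set0Pn=> e eS [u Fwu].
exact: le_trans (abse_ge0 _) (abse_sub_le_disc Fwu eS eS).
Qed.

Lemma disc_eq0_subset (S S' : {set Env}) :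
  S != finset.set0 -> S \subset S' ->
  disc Fw S' m Phi = 0%E -> disc Fw S m Phi = 0%E.
Proof.
move=> S0 SS' disc0; apply/le_anti; rewrite -{1}disc0 le_disc //=.
by apply: disc_ge0 => //; exact: disc_eq0_nonempty disc0.
Qed.

Lemma disc_eq0_const (S : {set Env}) u e e' :
  disc Fw S m Phi = 0%E -> Fw u -> e \in S -> e' \in S ->
  m Phi u e \is a fin_num -> m Phi u e' \is a fin_num ->
  m Phi u e = m Phi u e'.
Proof.
move=> disc0 Fwu eS e'S fin_e fin_e'.
have := abse_sub_le_disc Fwu eS e'S; rewrite disc0.
rewrite -(fineK fin_e) -(fineK fin_e') -EFinB abse_EFin lee_fin normr_le0.
by rewrite subr_eq0 => /eqP ->.
Qed.

End Discrepancy.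

Lemma eq_argmin_pairs {R : realType} {p : nat} {H : Type} (Fw : set (H -> R))
    (C : set ('rV[R]_p -> H))
    (obj1 obj2 : (H -> R) -> ('rV[R]_p -> H) -> \bar R) :
  (forall w Phi w' Phi', Fw w -> C Phi -> Fw w' -> C Phi' ->
     (obj1 w Phi <= obj1 w' Phi')%E = (obj2 w Phi <= obj2 w' Phi')%E) ->
  argmin_pairs Fw C obj1 = argmin_pairs Fw C obj2.
Proof.
move=> obj12; apply/seteqP; split=> -[w Phi] /= [Fww [CPhi minwPhi]];
  do 2!split=> //; move=> w' Phi' Fww' CPhi'.
- by rewrite -obj12 //; exact: minwPhi.
- by rewrite obj12 //; exact: minwPhi.
Qed.

Lemma sum_alpha_tr {R : realType} {Env : finType} (Etr : {set Env})
    (n : Env -> nat) :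
  (0 < \sum_(e in Etr) n e)%N -> \sum_(e in Etr) alpha_tr (R:=R) Etr n e = 1.
Proof.
by move=> N_gt0; rewrite -mulr_suml -natr_sum divff // pnatr_eq0 -lt0n.
Qed.

Section FAIRM.
Context {R : realType} {d : measure_display} {Omega : measurableType d}.
Context {Env : finType} {p : nat} {H : Type}.
Variable P : Env -> probability Omega R.
Variable x : Env -> Omega -> 'rV[R]_p.
Variable y : Env -> Omega -> R.
Variable Fw : set (H -> R).
Variable FPhi : set ('rV[R]_p -> H).

Local Notation Istar := (Istar P x y Fw FPhi).
Local Notation constr_set := (constr_set P x y Fw FPhi).

Lemma constr_set_eq_Istar (Etr : {set Env}) :
  Etr != finset.set0 ->
  (forall Phi, FPhi Phi -> ~ Istar Phi ->
     (0 < disc Fw Etr (momY P x y) Phi)%E \/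
     (0 < disc Fw Etr (mom2 P x) Phi)%E) ->
  constr_set Etr = Istar.
Proof.
move=> Etr0 ident; apply/seteqP; split=> Phi [FPhi_Phi [discY0 disc20]].
  apply: contrapT => notI.
  by case: (ident Phi FPhi_Phi notI); rewrite ?discY0 ?disc20 ltxx.
by split=> //; split; [move: discY0 | move: disc20];
  exact: disc_eq0_subset Etr0 (finset.subsetT Etr).
Qed.

Hypothesis y_measurable : forall e, measurable_fun setT (y e).
Hypothesis u_Phi_measurable : forall e Phi u, FPhi Phi -> Fw u ->
  measurable_fun setT (fun o => u (Phi (x e o))).
Hypothesis y_sqr_integrable : forall e,
  (P e).-integrable setT (fun o => ((y e o) ^+ 2)%:E).
Hypothesis u_Phi_sqr_integrable : forall e Phi u, FPhi Phi -> Fw u ->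
  (P e).-integrable setT (fun o => ((u (Phi (x e o))) ^+ 2)%:E).

Lemma Ex_sqr_residual e w Phi : FPhi Phi -> Fw w ->
  [/\ momY P x y Phi w e \is a fin_num, mom2 P x Phi w e \is a fin_num,
      Ex P e (fun o => y e o ^+ 2) \is a fin_num &
      Ex P e (fun o => (y e o - w (Phi (x e o))) ^+ 2) =
      (Ex P e (fun o => (y e o ^+ 2)%R) + (-2)%:E * momY P x y Phi w e
       + mom2 P x Phi w e)%E].
Proof.
move=> FPhi_Phi Fww.
have my := y_measurable e; have mw := u_Phi_measurable e FPhi_Phi Fww.
have iy := y_sqr_integrable e; have iw := u_Phi_sqr_integrable e FPhi_Phi Fww.
split; [| exact: integrable_fin_num iw | exact: integrable_fin_num iy |].
  exact: integrable_fin_num (integrable_mul_of_sqr my mw iy iw).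
exact: integral_sqrB.
Qed.

Lemma wrisk_Istar (S : {set Env}) (a : Env -> R) w Phi e0 :
  Istar Phi -> Fw w -> \sum_(e in S) a e = 1 ->
  wrisk P x y S a w Phi =
  (\sum_(e in S) a e * fine (Ex P e (fun o => y e o ^+ 2)) +
   (-2 * fine (momY P x y Phi w e0) + fine (mom2 P x Phi w e0)))%:E.
Proof.
move=> [FPhi_Phi [discY0 disc20]] Fww sum_a1.
rewrite /wrisk (eq_bigr (fun e => (a e * (fine (Ex P e (fun o => y e o ^+ 2))
   + (-2 * fine (momY P x y Phi w e0) + fine (mom2 P x Phi w e0))))%:E)).
  rewrite sumEFin; congr EFin.
  rewrite (eq_bigr _ (fun e _ => mulrDr _ _ _)) big_split /=.
  by rewrite -mulr_suml sum_a1 mul1r.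
move=> e _; rewrite EFinM; congr (_ * _)%E.
have [finY fin2 finy ->] := Ex_sqr_residual e FPhi_Phi Fww.
have [finY0 fin20 _ _] := Ex_sqr_residual e0 FPhi_Phi Fww.
have [eT e0T] := (finset.in_setT e, finset.in_setT e0).
rewrite (disc_eq0_const discY0 Fww eT e0T finY finY0).
rewrite (disc_eq0_const disc20 Fww eT e0T fin2 fin20).
by rewrite -(fineK finy) -(fineK finY0) -(fineK fin20) -EFinM -!EFinD addrA.
Qed.

Lemma argmin_wrisk_Istar (S S' : {set Env}) (a a' : Env -> R) :
  \sum_(e in S) a e = 1 -> \sum_(e in S') a' e = 1 ->
  argmin_pairs Fw Istar (wrisk P x y S a) =
  argmin_pairs Fw Istar (wrisk P x y S' a').
Proof.
move=> sum_a1 sum_a'1.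
have [e0 _|S0] := pickP [in S]; last first.
  move: sum_a1; rewrite (big_pred0 _ _ _ _ S0) => /esym/eqP.
  by rewrite oner_eq0.
apply: eq_argmin_pairs => w Phi w' Phi' Fww IPhi Fww' IPhi'.
by rewrite !(wrisk_Istar e0) // !lee_fin !lerD2l.
Qed.

End FAIRM.

Theorem proposition2 (R : realType) (d : measure_display)
  (Omega : measurableType d) (Env : finType) (p : nat) (H : Type)
  (P : Env -> probability Omega R)
  (x : Env -> Omega -> 'rV[R]_p) (y : Env -> Omega -> R)
  (FPhi : set ('rV[R]_p -> H)) (Fw : set (H -> R))
  (Etr : {set Env}) (n : Env -> nat) (alphastar : Env -> R) :
  Etr != finset.set0 ->
  (forall e, e \in Etr -> (0 < n e)%N) ->
  (forall e, 0 < alphastar e) ->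
  \sum_(e : Env) alphastar e = 1 ->
  (* standing well-posedness: measurable variables with finite second moments *)
  (forall e, measurable_fun setT (y e)) ->
  (forall e Phi u, FPhi Phi -> Fw u ->
     measurable_fun setT (fun o => u (Phi (x e o)))) ->
  (forall e, (P e).-integrable setT (fun o => ((y e o) ^+ 2)%:E)) ->
  (forall e Phi u, FPhi Phi -> Fw u ->
     (P e).-integrable setT (fun o => ((u (Phi (x e o))) ^+ 2)%:E)) ->
  (* identifiability assumption *)
  (forall Phi, FPhi Phi -> ~ Istar P x y Fw FPhi Phi ->
     (0 < disc Fw Etr (momY P x y) Phi)%E \/
     (0 < disc Fw Etr (mom2 P x) Phi)%E) ->
  constr_set P x y Fw FPhi Etr = Istar P x y Fw FPhi /\
  (Istar P x y Fw FPhi !=set0 ->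
     argmin_pairs Fw (constr_set P x y Fw FPhi Etr)
       (wrisk P x y Etr (alpha_tr Etr n))
     = argmin_pairs Fw (Istar P x y Fw FPhi)
       (wrisk P x y [set: Env] alphastar)).
Proof.
move=> Etr0 n_gt0 _ alphastar_sum1 my mu y2 u2 ident.
have constr_Etr := constr_set_eq_Istar Etr0 ident.
split=> // _; rewrite constr_Etr; apply: argmin_wrisk_Istar => //.
  apply: sum_alpha_tr; case/set0Pn: Etr0 => e eEtr.
  by rewrite (bigD1 e) //= addn_gt0 n_gt0.
by rewrite -alphastar_sum1; apply: eq_bigl => e; rewrite finset.in_setT.
Qed.
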